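(* Let $p\ge2$, $m\ge1$, $d\ge1$ be integers, and let $W\in\mathbb{R}^{d\times p}$, $V\in\mathbb{R}^{p\times d}$. If the ReLU network $s^\theta(x)=V\,\mathrm{ReLU}(Wx)$ exactly realizes modular addition on $\mathcal{X}_m$, i.e. $h_\theta(x)=y(x)$ for every $x\in\mathcal{X}_m$, then \[ d\ \ge\ \frac{m-p}{p+2}. \]
   Context: Let $[p]=\{0,1,\dots,p-1\}$ and $\mathcal{X}_m=\{x\in\{0,1,\dots,m\}^p:\ \|x\|_1=m\}$, with coordinates of $x$ indexed by $[p]$. The label of $x$ is $y(x)=(\sum_{r\in[p]} r\,x_r)\bmod p\in[p]$. $\mathrm{ReLU}(t)=\max\{0,t\}$ is applied entrywise. For a score vector $s^\theta(x)\in\mathbb{R}^p$ with coordinates indexed by $[p]$, the predictor is $h_\theta(x)=\ell$ if $s^\theta_\ell(x)>s^\theta_k(x)$ for all $k\ne\ell$, and $h_\theta(x)=\bot$ (invalid, never equal to a label) otherwise. *)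

From mathcomp Require Import all_boot all_order all_algebra.
From mathcomp Require Import reals.
Set Implicit Arguments. Unset Strict Implicit. Unset Printing Implicit Defensive.
Import Order.TTheory GRing.Theory Num.Theory.
Local Open Scope ring_scope.

Definition inXm (p m : nat) (x : 'I_p -> nat) : Prop :=
  (forall r, (x r <= m)%N) /\ (\sum_(r < p) x r)%N = m.

Definition label (p : nat) (x : 'I_p -> nat) : nat :=
  ((\sum_(r < p) (nat_of_ord r * x r)) %% p)%N.

Definition relu (R : realType) (t : R) : R := Num.max 0 t.

Definition score (R : realType) (p d : nat) (W : 'M[R]_(d, p)) (V : 'M[R]_(p, d))
  (x : 'I_p -> nat) : 'cV[R]_p :=
  V *m map_mx (@relu R) (W *m \col_(r < p) ((x r)%:R : R)).

(* predictor: Some l if l is the unique strict argmax of s, None (= bottom) otherwise *)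
Definition predict (R : realType) (p : nat) (s : 'cV[R]_p) : option nat :=
  if [pick l : 'I_p | [forall k : 'I_p, (k != l) ==> (s k ord0 < s l ord0)]]
    is Some l then Some (nat_of_ord l) else None.

From mathcomp Require Import all_boot all_order all_algebra reals.
From mathcomp Require Import ring lra zify.
Import Order.TTheory GRing.Theory Num.Theory.
Set Implicit Arguments. Unset Strict Implicit. Unset Printing Implicit Defensive.
Local Open Scope ring_scope.

(* Along the inputs x_a with m - a copies of token 0 and a copies of token 1,
   the label is a mod p and every preactivation (W x_a)_j is affine in a, so it
   changes sign at most once.  If no neuron changed sign strictly inside a
   window [a, a + p], all scores would be affine there and s(a + 1) would be a
   convex combination of s(a) and s(a + p); but a and a + p share their label
   while a + 1 has another one, so the winner at a + 1 would lose at both ends.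
   Hence each of the m %/ p disjoint windows [kp, kp + p] owns a neuron, and
   d >= m %/ p > m / p - 1. *)

Section ReluAffine.
Variable R : realType.

Lemma relu_conic (s t x y : R) : 0 <= s -> 0 <= t -> 0 <= x * y ->
  relu (s * x + t * y) = s * relu x + t * relu y.
Proof.
move=> s0 t0 xy0; rewrite /relu.
have [[x0 y0]|[x0 y0]] : (0 <= x /\ 0 <= y) \/ (x <= 0 /\ y <= 0).
  have [x0|x0] := lerP 0 x; have [y0|y0] := lerP 0 y;
    [left|right|right|right]; split; nra.
- by rewrite !max_r // addr_ge0 // mulr_ge0.
- have sum_le0 : s * x + t * y <= 0 by nra.
  by rewrite !max_l // !mulr0 addr0.
Qed.

Lemma mulr_lt0_le (x y : R) : x <= y -> x * y < 0 -> x < 0 < y.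
Proof. by move=> xy xy0; apply/andP; split; nra. Qed.

Lemma affine_sign_change_once (al be a b c e : R) :
  a <= b -> b <= c -> c <= e ->
  (al + a * be) * (al + b * be) < 0 -> 0 < (al + c * be) * (al + e * be).
Proof.
wlog be0 : al be / 0 <= be => [wlog_be|] ab bc ce.
  have [/wlog_be|be0] := lerP 0 be; first exact.
  have := wlog_be (- al) (- be); rewrite !mulrN -!opprD !mulrNN; apply=> //.
  by rewrite oppr_ge0 ltW.
have mono u v : u <= v -> al + u * be <= al + v * be.
  by move=> uv; rewrite lerD2l ler_wpM2r.
move/(mulr_lt0_le (mono _ _ ab))/andP => [_ fb0].
have fc0 := lt_le_trans fb0 (mono _ _ bc).
by rewrite mulr_gt0 // (lt_le_trans fc0 (mono _ _ ce)).
Qed.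

End ReluAffine.

Lemma predict_SomeP (R : realType) (p : nat) (s : 'cV[R]_p) (n : nat) :
  predict s = Some n ->
  exists2 l : 'I_p, val l = n & forall k, k != l -> s k ord0 < s l ord0.
Proof.
rewrite /predict; case: pickP => [l /forallP l_max [<-]|//].
by exists l => // k; move/implyP: (l_max k).
Qed.

Section TwoTokenLine.
Variables (R : realType) (n m d : nat).
Variables (W : 'M[R]_(d, n.+2)) (V : 'M[R]_(n.+2, d)).

Definition two_token (a : nat) (r : 'I_n.+2) : nat :=
  match val r with 0 => m - a | 1 => a | _ => 0 end%N.

Lemma two_token_inXm a : (a <= m)%N -> inXm m (two_token a).
Proof.
move=> am; split=> [r|]; last by rewrite !big_ord_recl big1 // addn0 subnK.
by rewrite /two_token; case: (val r) => [|[|]] //=; rewrite leq_subr.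
Qed.

Lemma label_two_token a : label (two_token a) = (a %% n.+2)%N.
Proof.
rewrite /label !big_ord_recl big1 => [|i _]; last by rewrite /= muln0.
by rewrite /= mul0n mul1n addn0.
Qed.

(* (W x_a)_j, extended affinely to a real parameter. *)
Definition preact (j : 'I_d) (t : R) : R :=
  m%:R * W j ord0 + t * (W j (lift ord0 ord0) - W j ord0).

Definition line_score (k : 'I_n.+2) (t : R) : R :=
  \sum_j V k j * relu (preact j t).

Lemma score_two_token a k : (a <= m)%N ->
  score W V (two_token a) k ord0 = line_score k a%:R.
Proof.
move=> am; rewrite /score !mxE; apply: eq_bigr => j _; rewrite !mxE.
rewrite !big_ord_recl big1 => [|r _]; last by rewrite !mxE mulr0.
by rewrite !mxE /two_token /= natrB // /preact; congr (_ * relu _); ring.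
Qed.

Lemma line_score_convex k (a b t : R) : 0 <= t -> t <= 1 ->
  (forall j, 0 <= preact j a * preact j b) ->
  line_score k ((1 - t) * a + t * b) = (1 - t) * line_score k a + t * line_score k b.
Proof.
move=> t0 t1 same_sign; rewrite /line_score !mulr_sumr -big_split.
apply: eq_bigr => j _ /=.
have -> : preact j ((1 - t) * a + t * b) = (1 - t) * preact j a + t * preact j b.
  by rewrite /preact; ring.
by rewrite relu_conic ?subr_ge0 //; ring.
Qed.

Hypothesis realizes :
  forall x : 'I_n.+2 -> nat, inXm m x -> predict (score W V x) = Some (label x).

Lemma two_token_winner a : (a <= m)%N ->
  exists2 l : 'I_n.+2, val l = (a %% n.+2)%N &
    forall k, k != l -> line_score k a%:R < line_score l a%:R.
Proof.
move=> am; have [l l_label l_max] := predict_SomeP (realizes (two_token_inXm am)).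
exists l => [|k kl]; first by rewrite l_label label_two_token.
by rewrite -!score_two_token // l_max.
Qed.

Lemma neuron_flips_in_window a : (a + n.+2 <= m)%N ->
  exists j, preact j a%:R * preact j (a + n.+2)%:R < 0.
Proof.
move=> window_in.
have [/existsP//|/existsPn no_flip] :=
  boolP [exists j, preact j a%:R * preact j (a + n.+2)%:R < 0].
have a_in : (a <= m)%N by lia.
have a1_in : (a.+1 <= m)%N by lia.
have [l0 l0_label l0_max] := two_token_winner a_in.
have [l1 l1_label l1_max] := two_token_winner a1_in.
have [l2 l2_label l2_max] := two_token_winner window_in.
have l20 : l2 = l0 by apply: val_inj; rewrite l2_label l0_label modnDr.
have l10 : l1 != l0 by rewrite -val_eqE l1_label l0_label -addn1 -{2}[a]addn0 eqn_modDl.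
pose t : R := n.+2%:R^-1.
have t0 : 0 <= t by rewrite invr_ge0.
have t1 : t <= 1 by rewrite invf_le1 ?ler1n ?ltr0n.
have next_as_convex : a.+1%:R = (1 - t) * a%:R + t * (a + n.+2)%:R :> R.
  by rewrite /t -addn1 !natrD; field; rewrite lt0r_neq0 // ltr_wpDr.
have interp k : line_score k a.+1%:R =
    (1 - t) * line_score k a%:R + t * line_score k (a + n.+2)%:R.
  by rewrite next_as_convex line_score_convex // => j; rewrite leNgt no_flip.
have lose_a := l0_max _ l10.
have lose_aP : line_score l1 (a + n.+2)%:R < line_score l0 (a + n.+2)%:R.
  by rewrite -l20 l2_max // l20.
have lose_next : (1 - t) * line_score l1 a%:R + t * line_score l1 (a + n.+2)%:R <=
                 (1 - t) * line_score l0 a%:R + t * line_score l0 (a + n.+2)%:R.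
  by rewrite lerD // ler_wpM2l ?subr_ge0 // ltW.
have l01 : l0 != l1 by rewrite eq_sym.
by have := l1_max _ l01; rewrite !interp ltNge lose_next.
Qed.

Lemma div_le_width : (m %/ n.+2 <= d)%N.
Proof.
have /fin_all_exists [f f_flips] : forall k : 'I_(m %/ n.+2), exists j,
    preact j (k * n.+2)%:R * preact j (k * n.+2 + n.+2)%:R < 0.
  move=> k; apply: neuron_flips_in_window.
  by have := ltn_ord k; rewrite leq_divRL // mulSn addnC.
have f_neq (k1 k2 : 'I_(m %/ n.+2)) : (k1 < k2)%N -> f k1 != f k2.
  move=> lt12; apply/eqP => same.
  have windows_ordered : (k1 * n.+2 + n.+2 <= k2 * n.+2)%N.
    by rewrite addnC -mulSn leq_mul2r lt12 orbT.
  have no_flip2 : 0 < preact (f k2) (k2 * n.+2)%:R * preact (f k2) (k2 * n.+2 + n.+2)%:R.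
    rewrite -same; apply: affine_sign_change_once (f_flips k1);
    by rewrite ler_nat ?leq_addr.
  by have := f_flips k2; rewrite (lt_gtF no_flip2).
have f_inj : injective f.
  move=> k1 k2 same; apply: val_inj.
  by case: (ltngtP k1 k2) => // /f_neq; rewrite same eqxx.
by have := leq_card f f_inj; rewrite !card_ord.
Qed.

End TwoTokenLine.

Theorem mainTheorem3 (R : realType) (p m d : nat)
  (hp : (2 <= p)%N) (hm : (1 <= m)%N) (hd : (1 <= d)%N)
  (W : 'M[R]_(d, p)) (V : 'M[R]_(p, d)) :
  (forall x : 'I_p -> nat, inXm m x -> predict (score W V x) = Some (label x)) ->
  (m%:R - p%:R) / (p%:R + 2) <= (d%:R : R).
Proof.
case: p hp W V => [|[|n]] // _ W V realizes.
have width := div_le_width realizes.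
have m_le : (m <= d * n.+2 + n.+2)%N.
  rewrite addnC -mulSn (leq_trans (ltnW (ltn_ceil m (ltn0Sn n.+1)))) //.
  by rewrite leq_mul2r ltnS width orbT.
have P_ge0 : (0 : R) <= n.+2%:R by rewrite ler0n.
have d_ge0 : (0 : R) <= d%:R by rewrite ler0n.
have m_le_real : (m%:R : R) <= d%:R * n.+2%:R + n.+2%:R by rewrite -natrM -natrD ler_nat.
rewrite ler_pdivrMr; lra.
Qed.
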